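(* Let $\Gamma=(V,E)$ be a locally finite reflexive relation and $v\in V$. If $F_1$ and $F_2$ are $v$-fragments, then $F_1\cap F_2$ and $F_1\cup F_2$ are $v$-fragments. In particular, there exists a $v$-fragment contained in every $v$-fragment.
   Context: A relation is a pair $\Gamma=(V,E)$ with $E\subset V\times V$; for $X\subset V$, $\Gamma(X)=\{y: (x,y)\in E \text{ for some } x\in X\}$, $\Gamma^-(X)=\{y:(y,x)\in E\text{ for some }x\in X\}$, $\Gamma(x)=\Gamma(\{x\})$. $\Gamma$ is reflexive if $(x,x)\in E$ for all $x$, and locally finite if $\Gamma(x)$ and $\Gamma^-(x)$ are finite for all $x$. Write $\partial(X)=\Gamma(X)\setminus X$. A set $F\subset V$ is a $v$-Moser set if $\Gamma^-(v)\cap F=\{v\}$. Let $\kappa_\Gamma(v)=\min\{|\partial(X)|: X \text{ a } v\text{-Moser set}\}$. A $v$-fragment is a $v$-Moser set $X$ with $|\partial(X)|=\kappa_\Gamma(v)$. *)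

From Stdlib Require Import List Arith.
Import ListNotations.

Section Rel.
Context {V : Type} (E : V -> V -> Prop).

Definition img (X : V -> Prop) : V -> Prop :=
  fun y => exists x, X x /\ E x y.
Definition preimg (X : V -> Prop) : V -> Prop :=
  fun y => exists x, X x /\ E y x.
Definition single (v : V) : V -> Prop := fun x => x = v.

Definition reflexive_rel : Prop := forall x, E x x.

Definition finite_set (A : V -> Prop) : Prop :=
  exists l : list V, forall x, A x <-> In x l.

Definition has_card (A : V -> Prop) (n : nat) : Prop :=
  exists l : list V, NoDup l /\ length l = n /\ (forall x, A x <-> In x l).

Definition locally_finite : Prop :=
  forall x, finite_set (img (single x)) /\ finite_set (preimg (single x)).

Definition bdry (X : V -> Prop) : V -> Prop := fun y => img X y /\ ~ X y.

Definition moser (v : V) (F : V -> Prop) : Prop :=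
  forall x, (preimg (single v) x /\ F x) <-> x = v.

(* k = kappa_Gamma(v): the minimum of |d(X)| over v-Moser sets X
   (sets with infinite boundary never attain/undercut a finite minimum) *)
Definition is_kappa (v : V) (k : nat) : Prop :=
  (exists X, moser v X /\ has_card (bdry X) k) /\
  (forall X m, moser v X -> has_card (bdry X) m -> k <= m).

Definition fragment (v : V) (X : V -> Prop) : Prop :=
  moser v X /\ exists k, is_kappa v k /\ has_card (bdry X) k.

End Rel.

(* The boundary is submodular: a vertex lying in the boundaries of both
   [A ∩ B] and [A ∪ B] lies in the boundaries of both [A] and [B], and a vertex
   in either of the former lies in one of the latter, so
   |∂(A ∩ B)| + |∂(A ∪ B)| <= |∂A| + |∂B|.  Intersections and unions of
   v-Moser sets are v-Moser, hence for two fragments both sides of this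
   inequality are at least 2κ and at most 2κ, forcing equality throughout.

   For the second claim, let [X] be the intersection of all fragments; it is a
   v-Moser set because [{v}] witnesses that κ exists.  Any finitely many points
   of ∂X are missed by some fragment [G] (a finite intersection of fragments)
   while [X ⊆ G], so they lie in ∂G; hence every finite subset of ∂X has at most
   κ points, ∂X is finite of size at most κ, and [X] is a fragment. *)
From Stdlib Require Import List Arith Lia Classical ClassicalDescription Wf_nat.
Import ListNotations.

Section Counting.
Context {V : Type}.

Definition holds_b (P : V -> Prop) (x : V) : bool :=
  if excluded_middle_informative (P x) then true else false.

Lemma holds_bP (P : V -> Prop) (x : V) : reflect (P x) (holds_b P x).
Proof.
  unfold holds_b; destruct (excluded_middle_informative (P x)); now constructor.
Qed.

Definition count_in (P : V -> Prop) (L : list V) : nat :=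
  length (filter (holds_b P) L).

Lemma has_card_count_in (P : V -> Prop) (L : list V) :
  NoDup L -> (forall x, P x -> In x L) -> has_card P (count_in P L).
Proof.
  intros HL HP; exists (filter (holds_b P) L); repeat split.
  - now apply NoDup_filter.
  - intros Px; apply filter_In; split; [now apply HP | now apply (Bool.reflect_iff _ _ (holds_bP P x))].
  - now intros [_ Px]%filter_In; apply (Bool.reflect_iff _ _ (holds_bP P x)).
Qed.

Lemma has_card_le (P Q : V -> Prop) (n m : nat) :
  has_card P n -> has_card Q m -> (forall x, P x -> Q x) -> n <= m.
Proof.
  intros [l [Hl [<- Hp]]] [l' [_ [<- Hq]]] PQ.
  apply NoDup_incl_length; [exact Hl|].
  intros x Hx; apply Hq, PQ, Hp, Hx.
Qed.

Lemma has_card_unique (P : V -> Prop) (n m : nat) :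
  has_card P n -> has_card P m -> n = m.
Proof.
  intros Hn Hm; apply Nat.le_antisymm; eapply has_card_le; eauto.
Qed.

Lemma NoDup_cover (l : list V) : exists L, NoDup L /\ forall x, In x l -> In x L.
Proof.
  exists (nodup (fun a b => excluded_middle_informative (a = b)) l); split.
  - apply NoDup_nodup.
  - intros x; apply nodup_In.
Qed.

(* Counting form of |Q1| + |Q2| <= |Q1 ∪ Q2| + |Q1 ∩ Q2| <= |P1 ∪ P2| + |P1 ∩ P2|. *)
Lemma count_in_submodular (P1 P2 Q1 Q2 : V -> Prop) (L : list V) :
  (forall x, Q1 x \/ Q2 x -> P1 x \/ P2 x) ->
  (forall x, Q1 x -> Q2 x -> P1 x /\ P2 x) ->
  count_in Q1 L + count_in Q2 L <= count_in P1 L + count_in P2 L.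
Proof.
  intros Hcup Hcap; induction L as [|x L IH]; [reflexivity|].
  unfold count_in in *; simpl.
  specialize (Hcup x); specialize (Hcap x).
  destruct (holds_bP Q1 x), (holds_bP Q2 x), (holds_bP P1 x), (holds_bP P2 x);
    simpl; first [lia | exfalso; tauto].
Qed.

Lemma has_card_submodular (P1 P2 Q1 Q2 : V -> Prop) (n1 n2 : nat) :
  has_card P1 n1 -> has_card P2 n2 ->
  (forall x, Q1 x \/ Q2 x -> P1 x \/ P2 x) ->
  (forall x, Q1 x -> Q2 x -> P1 x /\ P2 x) ->
  exists m1 m2, has_card Q1 m1 /\ has_card Q2 m2 /\ m1 + m2 <= n1 + n2.
Proof.
  intros H1 H2 Hcup Hcap.
  destruct H1 as [l1 H1], H2 as [l2 H2].
  destruct (NoDup_cover (l1 ++ l2)) as [L [HL Hcov]].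
  assert (inL : forall x, P1 x \/ P2 x -> In x L).
  { intros x Px; apply Hcov, in_or_app.
    destruct Px; [left; apply H1 | right; apply H2]; assumption. }
  assert (C : forall P, (forall x, P x -> P1 x \/ P2 x) -> has_card P (count_in P L))
    by (intros P HP; apply has_card_count_in; auto).
  exists (count_in Q1 L), (count_in Q2 L); repeat split; auto.
  rewrite (has_card_unique P1 n1 (count_in P1 L)), (has_card_unique P2 n2 (count_in P2 L));
    [apply count_in_submodular | ..]; auto.
  - now exists l2.
  - now exists l1.
Qed.

Lemma has_card_of_bounded (P : V -> Prop) (k : nat) :
  (forall l, NoDup l -> (forall y, In y l -> P y) -> length l <= k) ->
  exists n, has_card P n.
Proof.
  intros Hk.
  enough (G : forall d l, NoDup l -> (forall y, In y l -> P y) -> k <= length l + d ->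
            exists n, has_card P n)
    by (apply (G k []); [constructor | intros y [] | reflexivity]).
  induction d as [|d IH]; intros l Hl Hin Hlen;
    destruct (classic (exists y, P y /\ ~ In y l)) as [[y [Py Hy]] | Hall].
  - specialize (Hk (y :: l) (NoDup_cons y Hy Hl)).
    enough (length (y :: l) <= k) by (simpl in *; lia).
    apply Hk; intros z [<- | Hz]; auto.
  - exists (length l), l; repeat split; auto.
    intros Py; apply NNPP; eauto.
  - apply (IH (y :: l)); [now constructor | intros z [<- | Hz]; auto | simpl; lia].
  - exists (length l), l; repeat split; auto.
    intros Py; apply NNPP; eauto.
Qed.

Lemma nat_least (P : nat -> Prop) :
  (exists n, P n) -> exists n, P n /\ forall m, P m -> n <= m.
Proof.
  intros Hex.
  destruct (dec_inh_nat_subset_has_unique_least_element P (fun n => classic (P n)) Hex)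
    as [n [Hn _]].
  now exists n.
Qed.

End Counting.

Section Fragments.
Context {V : Type} (E : V -> V -> Prop) (v : V).

Lemma bdry_inter_union_cover (A B : V -> Prop) (x : V) :
  bdry E (fun z => A z /\ B z) x \/ bdry E (fun z => A z \/ B z) x ->
  bdry E A x \/ bdry E B x.
Proof.
  intros [[[z [[Az Bz] Ezx]] Hx] | [[z [[Az | Bz] Ezx]] Hx]].
  - destruct (classic (A x)); [right | left]; split; eauto; firstorder.
  - left; split; [now exists z | tauto].
  - right; split; [now exists z | tauto].
Qed.

Lemma bdry_inter_union_both (A B : V -> Prop) (x : V) :
  bdry E (fun z => A z /\ B z) x -> bdry E (fun z => A z \/ B z) x ->
  bdry E A x /\ bdry E B x.
Proof.
  intros [[z [[Az Bz] Ezx]] _] [_ Hx].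
  split; split; [now exists z | tauto | now exists z | tauto].
Qed.

Lemma bdry_card_submodular (A B : V -> Prop) (nA nB : nat) :
  has_card (bdry E A) nA -> has_card (bdry E B) nB ->
  exists nI nU, has_card (bdry E (fun z => A z /\ B z)) nI /\
                has_card (bdry E (fun z => A z \/ B z)) nU /\ nI + nU <= nA + nB.
Proof.
  intros HA HB; apply (has_card_submodular _ _ _ _ _ _ HA HB).
  - apply bdry_inter_union_cover.
  - apply bdry_inter_union_both.
Qed.

Lemma moser_inter (A B : V -> Prop) :
  moser E v A -> moser E v B -> moser E v (fun x => A x /\ B x).
Proof. intros HA HB x; specialize (HA x); specialize (HB x); tauto. Qed.

Lemma moser_union (A B : V -> Prop) :
  moser E v A -> moser E v B -> moser E v (fun x => A x \/ B x).
Proof. intros HA HB x; specialize (HA x); specialize (HB x); tauto. Qed.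

Lemma moser_contains (A : V -> Prop) : moser E v A -> A v.
Proof. intros HA; now apply (HA v). Qed.

Lemma is_kappa_unique (k k' : nat) : is_kappa E v k -> is_kappa E v k' -> k = k'.
Proof.
  intros [[X [HX CX]] Hk] [[Y [HY CY]] Hk'].
  apply Nat.le_antisymm; [apply (Hk Y) | apply (Hk' X)]; assumption.
Qed.

Lemma fragment_card (k : nat) (F : V -> Prop) :
  is_kappa E v k -> fragment E v F -> has_card (bdry E F) k.
Proof.
  intros Hk [_ [k' [Hk' CF]]]; now rewrite (is_kappa_unique k k').
Qed.

Lemma fragment_inter_union (F1 F2 : V -> Prop) :
  fragment E v F1 -> fragment E v F2 ->
  fragment E v (fun x => F1 x /\ F2 x) /\ fragment E v (fun x => F1 x \/ F2 x).
Proof.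
  intros Fr1 Fr2; destruct Fr1 as [M1 [k [Hk C1]]].
  pose proof (fragment_card k F2 Hk Fr2) as C2; destruct Fr2 as [M2 _].
  destruct (bdry_card_submodular F1 F2 k k C1 C2) as [nI [nU [CI [CU Hsum]]]].
  pose proof (moser_inter F1 F2 M1 M2) as MI.
  pose proof (moser_union F1 F2 M1 M2) as MU.
  pose proof (proj2 Hk _ _ MI CI); pose proof (proj2 Hk _ _ MU CU).
  split; split; auto; exists k; split; auto.
  - now replace k with nI by lia.
  - now replace k with nU by lia.
Qed.

Lemma fragment_inter_list (X0 : V -> Prop) (l : list V) :
  fragment E v X0 ->
  (forall y, In y l -> exists F, fragment E v F /\ ~ F y) ->
  exists G, fragment E v G /\ forall y, In y l -> ~ G y.
Proof.
  intros Fr0; induction l as [|y l IH]; intros Hl.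
  - exists X0; split; [exact Fr0 | intros y []].
  - destruct IH as [G [FrG HG]]; [intros z Hz; apply Hl; now right|].
    destruct (Hl y (or_introl eq_refl)) as [F [FrF Fy]].
    exists (fun x => G x /\ F x); split; [apply fragment_inter_union; assumption|].
    intros z [<- | Hz] [Gz Fz]; [tauto | exact (HG z Hz Gz)].
Qed.

Section Kernel.
Hypothesis Hrefl : reflexive_rel E.
Hypothesis Hlf : locally_finite E.

Lemma moser_single : moser E v (single v).
Proof.
  intros x; split; [now intros [_ Hx] | intros ->].
  split; [exists v; split; [reflexivity | apply Hrefl] | reflexivity].
Qed.

Lemma fragment_exists : exists F, fragment E v F /\ exists k, is_kappa E v k.
Proof.
  destruct (Hlf v) as [[l Hl] _].
  destruct (NoDup_cover l) as [L [HL HlL]].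
  pose proof (has_card_count_in (bdry E (single v)) L HL
                (fun x Hx => HlL x (proj1 (Hl x) (proj1 Hx)))) as Cv.
  destruct (nat_least (fun m => exists X, moser E v X /\ has_card (bdry E X) m))
    as [k [[X [MX CX]] Hmin]]; [eauto using moser_single|].
  assert (Hk : is_kappa E v k) by (split; eauto).
  exists X; split; [split; eauto | eauto].
Qed.

Lemma fragment_bigcap : fragment E v (fun x => forall F, fragment E v F -> F x).
Proof.
  set (X := fun x => forall F, fragment E v F -> F x).
  destruct fragment_exists as [X0 [Fr0 [k Hk]]].
  assert (MX : moser E v X).
  { intros x; split.
    - intros [Hx HXx]; apply (proj1 Fr0 x); split; [exact Hx | apply HXx, Fr0].
    - intros ->; split; [now apply moser_single|].
      intros F [MF _]; now apply moser_contains. }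
  assert (Hbound : forall l, NoDup l -> (forall y, In y l -> bdry E X y) -> length l <= k).
  { intros l Hl Hin.
    destruct (fragment_inter_list X0 l Fr0) as [G [FrG HG]].
    { intros y Hy; destruct (Hin y Hy) as [_ HXy].
      apply not_all_ex_not in HXy as [F HF]; exists F; tauto. }
    destruct (fragment_card k G Hk FrG) as [lg [_ [<- Hlg]]].
    apply NoDup_incl_length; [exact Hl|]; intros y Hy; apply Hlg.
    destruct (Hin y Hy) as [[x [Xx Exy]] _].
    split; [exists x; split; [apply Xx, FrG | exact Exy] | exact (HG y Hy)]. }
  destruct (has_card_of_bounded _ k Hbound) as [n CX].
  assert (n <= k).
  { destruct CX as [l [Hl [<- Hxl]]]; apply Hbound; [exact Hl|].
    intros y; apply Hxl. }
  pose proof (proj2 Hk X n MX CX).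
  split; [exact MX|]; exists k; split; [exact Hk|].
  now replace k with n by lia.
Qed.

End Kernel.
End Fragments.

Theorem lemma4p1 (V : Type) (E : V -> V -> Prop)
  (Hrefl : reflexive_rel E) (Hlf : locally_finite E) (v : V) :
  (forall F1 F2 : V -> Prop, fragment E v F1 -> fragment E v F2 ->
     fragment E v (fun x => F1 x /\ F2 x) /\
     fragment E v (fun x => F1 x \/ F2 x)) /\
  (exists F0 : V -> Prop, fragment E v F0 /\
     forall F : V -> Prop, fragment E v F -> forall x, F0 x -> F x).
Proof.
  split.
  - apply fragment_inter_union.
  - exists (fun x => forall F, fragment E v F -> F x); split.
    + now apply fragment_bigcap.
    + intros F HF x Hx; now apply Hx.
Qed.
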